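(* Let $k\ge2$ and $r\ge0$ be integers and $\alpha>k+r$ real. Then $$\sum_{n=1}^\infty\frac{H_{n+\alpha}}{\binom{n+k+r}{k}}=k\sum_{j=1}^{k-1}(-1)^{j+1}\binom{k-1}{j}\Bigg\{H_{\alpha-r-1}^2+H_{\alpha-r-1}^{(2)}-H_{\alpha-r-1-j}^2-H_{\alpha-r-1-j}^{(2)}-(r+1+j-\alpha)\sum_{i=1}^{r+1+j}\frac{H_{\alpha+i-r-1-j}}{i(\alpha+i-r-1-j)}+(r+1-\alpha)\sum_{i=1}^{r+1}\frac{H_{\alpha+i-r-1}}{i(\alpha+i-r-1)}\Bigg\},$$ $$\sum_{n=1}^\infty\frac{H_{n+\alpha}^{(2)}}{\binom{n+k+r}{k}}=k\sum_{j=1}^{k-1}(-1)^{j+1}\binom{k-1}{j}\Bigg\{(r+1-\alpha)\sum_{i=1}^{r+1}\frac{H^{(2)}_{\alpha+i-r-1}}{i(\alpha+i-r-1)}-(r+1+j-\alpha)\sum_{i=1}^{r+1+j}\frac{H^{(2)}_{\alpha+i-r-1-j}}{i(\alpha+i-r-1-j)}-\sum_{i=1}^{j}\frac{H_{\alpha+i-r-1-j}}{(\alpha+i-r-1-j)^2}$$ $$+2H^{(3)}_{\alpha-r-1}+H_{\alpha-r-1-j}\zeta(2)+2H_{\alpha-r-1}H^{(2)}_{\alpha-r-1}-2H^{(3)}_{\alpha-r-1-j}-H_{\alpha-r-1}\zeta(2)-2H_{\alpha-r-1-j}H^{(2)}_{\alpha-r-1-j}\Bigg\},$$ $$\sum_{n=1}^\infty\frac{H_{n+\alpha}^2}{\binom{n+k+r}{k}}=k\sum_{j=1}^{k-1}(-1)^{j+1}\binom{k-1}{j}\Bigg\{H^3_{\alpha-r-1}+H_{\alpha-r-1}H^{(2)}_{\alpha-r-1}+H_{\alpha-r-1}\zeta(2)-H^3_{\alpha-r-1-j}-H_{\alpha-r-1-j}H^{(2)}_{\alpha-r-1-j}-H_{\alpha-r-1-j}\zeta(2)$$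 $$+(r+1-\alpha)\sum_{i=1}^{r+1}\frac{H^2_{\alpha+i-r-1}}{i(\alpha+i-r-1)}+\sum_{i=1}^{j}\frac{H_{\alpha+i-r-1-j}}{(\alpha+i-r-1-j)^2}-(r+1+j-\alpha)\sum_{i=1}^{r+1+j}\frac{H^2_{\alpha+i-r-1-j}}{i(\alpha+i-r-1-j)}\Bigg\}.$$
   Context: Shifted harmonic numbers: for a real $\alpha$ that is not a negative integer, $H_\alpha := \sum_{k=1}^\infty\left(\frac1k-\frac1{k+\alpha}\right)$ and, for integers $m\ge 2$, $H_\alpha^{(m)} := \sum_{k=1}^\infty\left(\frac1{k^m}-\frac1{(k+\alpha)^m}\right)=\zeta(m)-\zeta(m,\alpha+1)$, where $\zeta$ is the Riemann zeta function and $\zeta(s,\alpha+1)=\sum_{n=1}^\infty (n+\alpha)^{-s}$ is the Hurwitz zeta function. Powers such as $H_\alpha^2$ mean $(H_\alpha)^2$. Empty sums are $0$. *)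

From Stdlib Require Import Reals ClassicalEpsilon.
Open Scope R_scope.

(* The value of a convergent series sum_{n>=0} f n (chosen by epsilon;
   unique by uniqueness of limits; irrelevant junk value if divergent). *)
Definition series_val (f : nat -> R) : R :=
  epsilon (inhabits 0) (fun l => infinite_sum f l).

Definition Hsh (a : R) : R :=
  series_val (fun k => / (INR k + 1) - / (INR k + 1 + a)).

Definition Hshm (m : nat) (a : R) : R :=
  series_val (fun k => / (INR k + 1) ^ m - / (INR k + 1 + a) ^ m).

Definition zeta (m : nat) : R := series_val (fun k => / (INR k + 1) ^ m).

Fixpoint sum1 (n : nat) (f : nat -> R) : R :=
  match n with
  | O => 0
  | S m => sum1 m f + f (S m)
  end.

(* Partial fractions give, for n >= 1,
     1 / C(n+k+r, k) = k sum_(j=1)^(k-1) (-1)^(j+1) C(k-1, j) sum_(i<j) 1 / ((n+r+1+i) (n+r+2+i)),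
   so each series is a finite combination of tails of B_F(y) = sum_(n>=1) F(n+y) / (n (n+1))
   at y = alpha-r-1-i.  For F = H, H^(2), H^2, Abel summation evaluates B_F(y) from
   H_(y+1) = H_y + 1/(y+1), sum_(n>=1) 1/(n (n+y)) = H_y / y and the quadratic sum
   sum_(n>=1) H_(n+y) (1/n - 1/(n+y)) = H_y^2 + H_y^(2).  Finally an explicit P with
   P(x+1) - P(x) + x F(x+1)/(x+1) + corr(x+1) = B_F(x+1) makes the tails telescope in i. *)

From Stdlib Require Import Reals Lra Lia ClassicalEpsilon Arith.
From Coquelicot Require Import Coquelicot.
(* Coquelicot's complex numbers [C] would otherwise shadow the binomial coefficient. *)
Import Stdlib.Reals.Binomial.
Open Scope R_scope.

Fixpoint sum0 (n : nat) (f : nat -> R) : R :=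
  match n with O => 0 | S m => sum0 m f + f m end.

Fixpoint prod0 (n : nat) (f : nat -> R) : R :=
  match n with O => 1 | S m => prod0 m f * f m end.

Lemma sum0_ext (n : nat) (f g : nat -> R) :
  (forall i, (i < n)%nat -> f i = g i) -> sum0 n f = sum0 n g.
Proof.
  induction n as [|n IH]; intro Hfg; simpl; [reflexivity|].
  rewrite IH, Hfg; [reflexivity|lia|intros; apply Hfg; lia].
Qed.

Lemma sum1_ext (n : nat) (f g : nat -> R) :
  (forall i, (1 <= i <= n)%nat -> f i = g i) -> sum1 n f = sum1 n g.
Proof.
  induction n as [|n IH]; intro Hfg; simpl; [reflexivity|].
  rewrite IH, Hfg; [reflexivity|lia|intros; apply Hfg; lia].
Qed.

Lemma sum0_succ_l (n : nat) (f : nat -> R) : sum0 (S n) f = f 0%nat + sum0 n (fun i => f (S i)).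
Proof. induction n as [|n IH]; [simpl; ring|]. cbn [sum0] in *. rewrite IH. ring. Qed.

Lemma sum0_sum1 (n : nat) (f : nat -> R) : sum0 (S n) f = f 0%nat + sum1 n f.
Proof. induction n as [|n IH]; [simpl; ring|]. cbn [sum0 sum1] in *. rewrite IH. ring. Qed.

Lemma sum0_plus (n : nat) (f g : nat -> R) : sum0 n (fun i => f i + g i) = sum0 n f + sum0 n g.
Proof. induction n as [|n IH]; simpl; [ring|rewrite IH; ring]. Qed.

Lemma sum0_minus (n : nat) (f g : nat -> R) : sum0 n (fun i => f i - g i) = sum0 n f - sum0 n g.
Proof. induction n as [|n IH]; simpl; [ring|rewrite IH; ring]. Qed.

Lemma sum0_scal (n : nat) (c : R) (f : nat -> R) : sum0 n (fun i => c * f i) = c * sum0 n f.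
Proof. induction n as [|n IH]; simpl; [ring|rewrite IH; ring]. Qed.

Lemma sum1_scal (n : nat) (c : R) (f : nat -> R) : sum1 n (fun i => c * f i) = c * sum1 n f.
Proof. induction n as [|n IH]; simpl; [ring|rewrite IH; ring]. Qed.

Lemma sum1_0 (n : nat) : sum1 n (fun _ => 0) = 0.
Proof. induction n as [|n IH]; simpl; [reflexivity|rewrite IH; ring]. Qed.

Lemma sum1_opp (n : nat) (f : nat -> R) : sum1 n (fun i => - f i) = - sum1 n f.
Proof. induction n as [|n IH]; simpl; [ring|rewrite IH; ring]. Qed.

Lemma sum1_reflect (f : R -> R) (A : R) (j : nat) :
  sum1 j (fun i => f (A + INR i - INR j)) = sum0 j (fun i => f (A - INR i)).
Proof.
  revert A. induction j as [|j IH]; intro A; [reflexivity|].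
  cbn [sum1]. rewrite sum0_succ_l.
  rewrite (sum1_ext j _ (fun i => f ((A - 1) + INR i - INR j)))
    by (intros i _; f_equal; rewrite S_INR; ring).
  rewrite IH. replace (A + INR (S j) - INR (S j)) with (A - INR 0) by (simpl; ring).
  rewrite Rplus_comm. f_equal. apply sum0_ext. intros i _. f_equal. rewrite S_INR. ring.
Qed.

Lemma prod0_succ_l (n : nat) (f : nat -> R) : prod0 (S n) f = f 0%nat * prod0 n (fun i => f (S i)).
Proof. induction n as [|n IH]; [simpl; ring|]. cbn [prod0] in *. rewrite IH. ring. Qed.

Lemma prod0_ext (n : nat) (f g : nat -> R) : (forall i, f i = g i) -> prod0 n f = prod0 n g.
Proof. intro Hfg. induction n as [|n IH]; simpl; [reflexivity|now rewrite IH, Hfg]. Qed.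

Lemma prod0_pos (n : nat) (f : nat -> R) : (forall i, 0 < f i) -> 0 < prod0 n f.
Proof. intro Hf. induction n as [|n IH]; simpl; [lra|now apply Rmult_lt_0_compat]. Qed.

Lemma series_val_eq (f : nat -> R) (l : R) : is_series f l -> series_val f = l.
Proof.
  intro Hf. unfold series_val.
  assert (Hex : exists l, infinite_sum f l) by (exists l; apply is_series_Reals, Hf).
  pose proof (epsilon_spec (inhabits 0) (fun l => infinite_sum f l) Hex) as Hval.
  apply is_series_Reals, is_series_unique in Hval.
  apply is_series_unique in Hf. congruence.
Qed.

Lemma is_series_series_val (f : nat -> R) : ex_series f -> is_series f (series_val f).
Proof. intros [l Hl]. now rewrite (series_val_eq f l Hl). Qed.

Lemma infinite_sum_eq (f : nat -> R) (l l' : R) : infinite_sum f l -> l = l' -> infinite_sum f l'.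
Proof. now intros Hf <-. Qed.

Lemma is_series_eq (a b : nat -> R) (la lb : R) :
  (forall n, a n = b n) -> la = lb -> is_series a la -> is_series b lb.
Proof. intros Hab <-. exact (is_series_ext a b la Hab). Qed.

Lemma is_series_Rplus (a b : nat -> R) (la lb : R) :
  is_series a la -> is_series b lb -> is_series (fun n => a n + b n) (la + lb).
Proof. exact (is_series_plus a b la lb). Qed.

Lemma is_series_Rminus (a b : nat -> R) (la lb : R) :
  is_series a la -> is_series b lb -> is_series (fun n => a n - b n) (la - lb).
Proof. exact (is_series_minus a b la lb). Qed.

Lemma is_series_Rmult_l (c : R) (a : nat -> R) (l : R) :
  is_series a l -> is_series (fun n => c * a n) (c * l).
Proof. exact (is_series_scal c a l). Qed.

Lemma is_series_val_unique (a : nat -> R) (l1 l2 : R) :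
  is_series a l1 -> is_series a l2 -> l1 = l2.
Proof. intros H1 H2. apply is_series_unique in H1, H2. congruence. Qed.

Lemma is_series_of_lim (a : nat -> R) (l : R) :
  is_lim_seq (sum_n a) l -> is_series a l.
Proof. intro H. exact H. Qed.

Lemma is_series_0 : is_series (fun _ => 0) 0.
Proof.
  apply is_series_of_lim, is_lim_seq_ext with (fun _ => 0); [|apply is_lim_seq_const].
  intro n. rewrite sum_n_const. ring.
Qed.

Lemma sum_n_telescope (a : nat -> R) (N : nat) :
  sum_n (fun n => a (S n) - a n) N = a (S N) - a 0%nat.
Proof.
  induction N as [|N IH]; [now rewrite sum_O|].
  rewrite sum_Sn, IH. unfold plus; simpl. ring.
Qed.

Lemma is_series_telescope (a : nat -> R) (l : R) :
  is_lim_seq a l -> is_series (fun n => a n - a (S n)) (a 0%nat - l).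
Proof.
  intro Ha.
  apply is_series_of_lim, is_lim_seq_ext with (fun N => a 0%nat - a (S N)).
  { intro N. pose proof (sum_n_telescope (fun m => - a m) N) as E. cbv beta in E.
    rewrite (sum_n_ext _ (fun n => - a (S n) - - a n) N) by (intro; simpl; ring).
    rewrite E. ring. }
  apply is_lim_seq_minus'; [apply is_lim_seq_const|].
  now apply (is_lim_seq_incr_1 a l).
Qed.

Lemma is_lim_seq_inv_INR_shift (c : R) :
  0 <= c -> is_lim_seq (fun n => / (INR n + 1 + c)) 0.
Proof.
  intro Hc. replace (Finite 0) with (Rbar_inv p_infty) by reflexivity.
  apply is_lim_seq_inv; [|discriminate].
  apply (is_lim_seq_plus _ _ p_infty c); [|apply is_lim_seq_const|reflexivity].
  apply (is_lim_seq_plus _ _ p_infty 1); [apply is_lim_seq_INR|apply is_lim_seq_const|reflexivity].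
Qed.

Lemma is_lim_seq_inv_INR : is_lim_seq (fun n => / (INR n + 1)) 0.
Proof.
  apply is_lim_seq_ext with (fun n => / (INR n + 1 + 0)).
  - intro n. now rewrite Rplus_0_r.
  - apply is_lim_seq_inv_INR_shift, Rle_refl.
Qed.

Lemma ex_series_le_nonneg (a b : nat -> R) :
  (forall n, 0 <= a n <= b n) -> ex_series b -> ex_series a.
Proof.
  intros Hab Hb. apply (ex_series_le a b); [intro n|exact Hb].
  change (norm (a n)) with (Rabs (a n)). rewrite Rabs_pos_eq; apply Hab.
Qed.

Lemma ex_series_inv_sq : ex_series (fun n => / (INR n + 1) ^ 2).
Proof.
  apply ex_series_le_nonneg with (fun n => 2 * (/ (INR n + 1) - / (INR (S n) + 1))).
  - intro n. rewrite S_INR. pose proof (pos_INR n). split.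
    + apply Rlt_le, Rinv_0_lt_compat. nra.
    + replace (2 * (/ (INR n + 1) - / (INR n + 1 + 1)))
        with (/ ((INR n + 1) * (INR n + 1 + 1) / 2)) by (field; lra).
      apply Rinv_le_contravar; nra.
  - exists (2 * (/ (INR 0 + 1) - 0)). apply is_series_Rmult_l.
    exact (is_series_telescope (fun n => / (INR n + 1)) 0 is_lim_seq_inv_INR).
Qed.

Lemma is_series_sum1 (N : nat) (f : nat -> nat -> R) (l : nat -> R) :
  (forall j, (1 <= j <= N)%nat -> is_series (f j) (l j)) ->
  is_series (fun n => sum1 N (fun j => f j n)) (sum1 N l).
Proof.
  induction N as [|N IH]; intro Hf; simpl; [apply is_series_0|].
  apply is_series_Rplus; [apply IH; intros j Hj|]; apply Hf; lia.
Qed.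

Lemma is_series_sum0 (N : nat) (f : nat -> nat -> R) (l : nat -> R) :
  (forall j, (j < N)%nat -> is_series (f j) (l j)) ->
  is_series (fun n => sum0 N (fun j => f j n)) (sum0 N l).
Proof.
  induction N as [|N IH]; intro Hf; simpl; [apply is_series_0|].
  apply is_series_Rplus; [apply IH; intros j Hj|]; apply Hf; lia.
Qed.

Lemma is_series_shift (a : nat -> R) (L : R) :
  is_series (fun n => a (S n)) L ->
  forall M, is_series (fun n => a (n + M + 1)%nat) (L - sum1 M a).
Proof.
  intros Ha M. induction M as [|M IH].
  - revert Ha. apply is_series_eq; [intro n; f_equal; lia|simpl; ring].
  - assert (H2 : is_series (fun n => a (n + M + 1)%nat)
                   (plus (L - sum1 (S M) a) (a (0 + M + 1)%nat))).
    { revert IH. apply is_series_eq; [reflexivity|].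
      replace (0 + M + 1)%nat with (S M) by lia. unfold plus; simpl. ring. }
    pose proof (is_series_incr_1 _ _ H2) as H3. revert H3.
    apply is_series_eq; [intro n; f_equal; lia|reflexivity].
Qed.

Lemma is_series_zeta (m : nat) :
  (2 <= m)%nat -> is_series (fun n => / (INR n + 1) ^ m) (zeta m).
Proof.
  intro Hm. apply is_series_series_val.
  apply ex_series_le_nonneg with (fun n => / (INR n + 1) ^ 2); [|apply ex_series_inv_sq].
  intro n. pose proof (pos_INR n). split.
  - apply Rlt_le, Rinv_0_lt_compat, pow_lt; lra.
  - apply Rinv_le_contravar; [apply pow_lt; lra|apply Rle_pow; [lra|exact Hm]].
Qed.

Lemma is_series_Hsh (x : R) :
  0 <= x -> is_series (fun n => / (INR n + 1) - / (INR n + 1 + x)) (Hsh x).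
Proof.
  intro Hx. apply is_series_series_val.
  apply ex_series_le_nonneg with (fun n => x * / (INR n + 1) ^ 2).
  - intro n. pose proof (pos_INR n). split.
    + assert (/ (INR n + 1 + x) <= / (INR n + 1)) by (apply Rinv_le_contravar; lra). lra.
    + replace (/ (INR n + 1) - / (INR n + 1 + x))
        with (x * / ((INR n + 1) * (INR n + 1 + x))) by (field; lra).
      apply Rmult_le_compat_l; [exact Hx|]. apply Rinv_le_contravar; nra.
  - destruct ex_series_inv_sq as [l Hl]. exists (x * l). now apply is_series_Rmult_l.
Qed.

Lemma is_series_Hshm (m : nat) (x : R) : (2 <= m)%nat -> 0 <= x ->
  is_series (fun n => / (INR n + 1) ^ m - / (INR n + 1 + x) ^ m) (Hshm m x).
Proof.
  intros Hm Hx. apply is_series_series_val.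
  apply ex_series_le_nonneg with (fun n => / (INR n + 1) ^ m); [|exists (zeta m); now apply is_series_zeta].
  intro n. pose proof (pos_INR n).
  assert (0 < (INR n + 1) ^ m) by (apply pow_lt; lra).
  assert (0 < (INR n + 1 + x) ^ m) by (apply pow_lt; lra).
  assert (/ (INR n + 1 + x) ^ m <= / (INR n + 1) ^ m)
    by (apply Rinv_le_contravar; [assumption|apply pow_incr; lra]).
  assert (0 < / (INR n + 1 + x) ^ m) by (apply Rinv_0_lt_compat; assumption).
  lra.
Qed.

Lemma Hsh_0 : Hsh 0 = 0.
Proof.
  apply (is_series_val_unique _ _ _ (is_series_Hsh 0 (Rle_refl 0))).
  apply is_series_eq with (fun _ => 0) 0; [intro n; rewrite Rplus_0_r; ring|reflexivity|].
  exact is_series_0.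
Qed.

Lemma Hshm_0 (m : nat) : (2 <= m)%nat -> Hshm m 0 = 0.
Proof.
  intro Hm. apply (is_series_val_unique _ _ _ (is_series_Hshm m 0 Hm (Rle_refl 0))).
  apply is_series_eq with (fun _ => 0) 0; [intro n; rewrite Rplus_0_r; ring|reflexivity|].
  exact is_series_0.
Qed.

Lemma is_series_shift_difference (c : nat -> R) (h : R -> R) (x S0 S1 : R) :
  is_lim_seq (fun n => h (INR n + 1 + x)) 0 ->
  is_series (fun n => c n - h (INR n + 1 + x)) S0 ->
  is_series (fun n => c n - h (INR n + 1 + (x + 1))) S1 ->
  S1 = S0 + h (x + 1).
Proof.
  intros Hlim H0 H1.
  pose proof (is_series_Rminus _ _ _ _ H1 H0) as Hdiff.
  pose proof (is_series_telescope _ 0 Hlim) as Htele.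
  assert (S1 - S0 = h (x + 1)); [|lra].
  apply (is_series_val_unique _ _ _ Hdiff). revert Htele.
  apply is_series_eq.
  - intro n. rewrite S_INR. replace (INR n + 1 + 1 + x) with (INR n + 1 + (x + 1)) by ring. ring.
  - simpl. rewrite Rminus_0_r. f_equal. ring.
Qed.

Lemma Hsh_succ (x : R) : 0 <= x -> Hsh (x + 1) = Hsh x + / (x + 1).
Proof.
  intro Hx. apply (is_series_shift_difference (fun n => / (INR n + 1)) Rinv x).
  - now apply is_lim_seq_inv_INR_shift.
  - now apply is_series_Hsh.
  - apply is_series_Hsh. lra.
Qed.

Lemma Hshm_succ (m : nat) (x : R) :
  (2 <= m)%nat -> 0 <= x -> Hshm m (x + 1) = Hshm m x + / (x + 1) ^ m.
Proof.
  intros Hm Hx. apply (is_series_shift_difference (fun n => / (INR n + 1) ^ m) (fun t => / t ^ m) x).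
  - apply is_lim_seq_le_le with (fun _ => 0) (fun n => / (INR n + 1 + x));
      [|apply is_lim_seq_const|now apply is_lim_seq_inv_INR_shift].
    intro n. pose proof (pos_INR n). split.
    + apply Rlt_le, Rinv_0_lt_compat, pow_lt; lra.
    + apply Rinv_le_contravar; [lra|].
      rewrite <- (pow_1 (INR n + 1 + x)) at 1. apply Rle_pow; [lra|lia].
  - now apply is_series_Hshm.
  - apply is_series_Hshm; [exact Hm|lra].
Qed.

Lemma Hsh_le (x y : R) : 0 <= x -> x <= y -> Hsh x <= Hsh y.
Proof.
  intros Hx Hxy. rewrite <- (is_series_unique _ _ (is_series_Hsh x Hx)).
  rewrite <- (is_series_unique _ _ (is_series_Hsh y ltac:(lra))).
  apply Series_le; [|eexists; apply is_series_Hsh; lra].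
  intro n. pose proof (pos_INR n).
  assert (/ (INR n + 1 + x) <= / (INR n + 1)) by (apply Rinv_le_contravar; lra).
  assert (/ (INR n + 1 + y) <= / (INR n + 1 + x)) by (apply Rinv_le_contravar; lra). lra.
Qed.

Lemma Hsh_ge0 (x : R) : 0 <= x -> 0 <= Hsh x.
Proof. intro Hx. rewrite <- Hsh_0. apply Hsh_le; lra. Qed.

Lemma Hshm_le (m : nat) (x y : R) : (2 <= m)%nat -> 0 <= x -> x <= y -> Hshm m x <= Hshm m y.
Proof.
  intros Hm Hx Hxy. rewrite <- (is_series_unique _ _ (is_series_Hshm m x Hm Hx)).
  rewrite <- (is_series_unique _ _ (is_series_Hshm m y Hm ltac:(lra))).
  apply Series_le; [|eexists; apply is_series_Hshm; lia || lra].
  intro n. pose proof (pos_INR n).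
  assert (/ (INR n + 1 + x) ^ m <= / (INR n + 1) ^ m)
    by (apply Rinv_le_contravar; [apply pow_lt; lra|apply pow_incr; lra]).
  assert (/ (INR n + 1 + y) ^ m <= / (INR n + 1 + x) ^ m)
    by (apply Rinv_le_contravar; [apply pow_lt; lra|apply pow_incr; lra]).
  lra.
Qed.

(** * Kronecker's lemma and Abel summation *)

Lemma sum_n_Kronecker (c : nat -> R) (N : nat) :
  sum_n c N = (INR N + 2) * sum_n (fun n => c n / INR (S n)) N
              - sum_n (sum_n (fun n => c n / INR (S n))) N.
Proof.
  induction N as [|N IH].
  - rewrite !sum_O. simpl. field.
  - rewrite !sum_Sn. unfold plus; cbn -[INR sum_n]. rewrite IH, !S_INR.
    field. pose proof (pos_INR N). lra.
Qed.

Lemma is_lim_seq_INR_ratio (c : R) :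
  0 <= c -> is_lim_seq (fun N => (INR N + 1 + c) / (INR N + 1)) 1.
Proof.
  intro Hc. apply is_lim_seq_ext with (fun N => 1 + c * / (INR N + 1)).
  - intro n. field. pose proof (pos_INR n). lra.
  - replace (Finite 1) with (Finite (1 + c * 0)) by (f_equal; ring).
    apply is_lim_seq_plus'; [apply is_lim_seq_const|].
    apply is_lim_seq_mult'; [apply is_lim_seq_const|apply is_lim_seq_inv_INR].
Qed.

(* The Cesaro means of the partial sums [s N] of the weighted series tend to its
   sum, and [sum_n_Kronecker] expresses [sum_n c N] through [s N] and these means. *)
Lemma Kronecker (c : nat -> R) (L : R) :
  is_series (fun n => c n / INR (S n)) L ->
  is_lim_seq (fun N => sum_n c N / INR (S N)) 0.
Proof.
  intro HL. set (s := sum_n (fun n => c n / INR (S n))).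
  assert (Hs : is_lim_seq s L) by exact HL.
  assert (Hmean : is_lim_seq (fun N => sum_n s N / INR (S N)) L).
  { pose proof (Cesaro_1 s L (proj1 (is_lim_seq_Reals s L) Hs)) as Hc.
    apply is_lim_seq_Reals, (is_lim_seq_incr_1 _ L) in Hc. revert Hc.
    apply is_lim_seq_ext. intro n. simpl pred. now rewrite sum_n_Reals. }
  apply is_lim_seq_ext with (fun N => s N * ((INR N + 1 + 1) / (INR N + 1)) - sum_n s N / INR (S N)).
  { intro N. rewrite (sum_n_Kronecker c N). fold s. rewrite S_INR.
    field. pose proof (pos_INR N). lra. }
  replace (Finite 0) with (Finite (L * 1 - L)) by (f_equal; ring).
  apply is_lim_seq_minus'; [apply is_lim_seq_mult'; [exact Hs|]|exact Hmean].
  apply is_lim_seq_INR_ratio, Rle_0_1.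
Qed.

Lemma sum_n_Abel (u : nat -> R) (N : nat) :
  sum_n (fun n => u (S n) / (INR (S n) * (INR (S n) + 1))) N =
  u 0%nat + sum_n (fun n => (u (S n) - u n) / INR (S n)) N - u (S N) / (INR (S N) + 1).
Proof.
  induction N as [|N IH].
  - rewrite !sum_O. simpl. field.
  - rewrite !sum_Sn. unfold plus; cbn -[INR sum_n]. rewrite IH, !S_INR.
    field. pose proof (pos_INR N). lra.
Qed.

Lemma is_lim_seq_Abel_remainder (u : nat -> R) (L : R) :
  is_series (fun n => (u (S n) - u n) / INR (S n)) L ->
  is_lim_seq (fun N => u (S N) / (INR (S N) + 1)) 0.
Proof.
  intro HL. pose proof (Kronecker _ _ HL) as HK.
  apply is_lim_seq_ext with (fun N => u 0%nat * / (INR (S N) + 1) +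
    sum_n (fun n => u (S n) - u n) N / INR (S N) * / ((INR N + 1 + 1) / (INR N + 1))).
  { intro N. rewrite sum_n_telescope, !S_INR. pose proof (pos_INR N). field. lra. }
  replace (Finite 0) with (Finite (u 0%nat * 0 + 0 * / 1)) by (f_equal; ring).
  apply is_lim_seq_plus'.
  - apply is_lim_seq_mult'; [apply is_lim_seq_const|].
    now apply (is_lim_seq_incr_1 (fun n => / (INR n + 1))), is_lim_seq_inv_INR.
  - apply is_lim_seq_mult'; [exact HK|].
    apply (is_lim_seq_inv _ 1); [apply is_lim_seq_INR_ratio, Rle_0_1|intro E; injection E; lra].
Qed.

Lemma is_series_Abel (u : nat -> R) (L : R) :
  is_series (fun n => (u (S n) - u n) / INR (S n)) L ->
  is_series (fun n => u (S n) / (INR (S n) * (INR (S n) + 1))) (u 0%nat + L).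
Proof.
  intro HL. apply is_series_of_lim, is_lim_seq_ext with
    (fun N => u 0%nat + sum_n (fun n => (u (S n) - u n) / INR (S n)) N - u (S N) / (INR (S N) + 1)).
  { intro N. symmetry. apply sum_n_Abel. }
  replace (Finite (u 0%nat + L)) with (Finite (u 0%nat + L - 0)) by (f_equal; ring).
  apply is_lim_seq_minus'; [apply is_lim_seq_plus'; [apply is_lim_seq_const|exact HL]|].
  exact (is_lim_seq_Abel_remainder u L HL).
Qed.

(** * The series [sum_(n >= 1) F (n + y) / (n (n + 1))] *)

Lemma ex_series_inv_mul_shift (y : R) :
  0 <= y -> ex_series (fun n => / (INR (S n) * (INR (S n) + y))).
Proof.
  intro Hy. apply ex_series_le_nonneg with (fun n => / (INR n + 1) ^ 2); [|apply ex_series_inv_sq].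
  intro n. rewrite S_INR. pose proof (pos_INR n). split.
  - apply Rlt_le, Rinv_0_lt_compat. nra.
  - apply Rinv_le_contravar; nra.
Qed.

Lemma is_series_inv_mul_shift (y : R) :
  0 < y -> is_series (fun n => / (INR (S n) * (INR (S n) + y))) (Hsh y / y).
Proof.
  intro Hy. pose proof (is_series_Rmult_l (/ y) _ _ (is_series_Hsh y ltac:(lra))) as H.
  revert H. apply is_series_eq.
  - intro n. rewrite S_INR. pose proof (pos_INR n). field. lra.
  - field. lra.
Qed.

Lemma is_series_Hurwitz2 (y : R) :
  0 <= y -> is_series (fun n => / (INR n + 1 + y) ^ 2) (zeta 2 - Hshm 2 y).
Proof.
  intro Hy.
  pose proof (is_series_Rminus _ _ _ _ (is_series_zeta 2 (le_n 2)) (is_series_Hshm 2 y (le_n 2) Hy)) as H.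
  revert H. apply is_series_eq; [intro n; ring|reflexivity].
Qed.

Lemma is_series_inv_mul_sq_shift (y : R) :
  0 < y -> is_series (fun n => / (INR (S n) * (INR (S n) + y) ^ 2))
                     (Hsh y / y ^ 2 - (zeta 2 - Hshm 2 y) / y).
Proof.
  intro Hy.
  pose proof (is_series_Rminus _ _ _ _ (is_series_Rmult_l (/ y ^ 2) _ _ (is_series_Hsh y ltac:(lra)))
                (is_series_Rmult_l (/ y) _ _ (is_series_Hurwitz2 y ltac:(lra)))) as H.
  revert H. apply is_series_eq.
  - intro n. rewrite S_INR. pose proof (pos_INR n). field. lra.
  - field. lra.
Qed.

Lemma Hsh_INR_diff (y : R) (n : nat) : 0 <= y ->
  (Hsh (INR (S n) + y) - Hsh (INR n + y)) / INR (S n) = / (INR (S n) * (INR (S n) + y)).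
Proof.
  intro Hy. rewrite S_INR. pose proof (pos_INR n).
  replace (INR n + 1 + y) with (INR n + y + 1) by ring.
  rewrite Hsh_succ by lra. field. lra.
Qed.

Lemma is_series_Hsh_weighted_of (y L : R) : 0 <= y ->
  is_series (fun n => / (INR (S n) * (INR (S n) + y))) L ->
  is_series (fun n => Hsh (INR (S n) + y) / (INR (S n) * (INR (S n) + 1))) (Hsh y + L).
Proof.
  intros Hy HL.
  replace (Hsh y) with ((fun n => Hsh (INR n + y)) 0%nat) by (simpl; f_equal; ring).
  apply (is_series_Abel (fun n => Hsh (INR n + y)) L). revert HL.
  apply is_series_eq; [intro n; symmetry; now apply Hsh_INR_diff|reflexivity].
Qed.

Lemma is_series_Hsh_weighted (y : R) : 0 < y ->
  is_series (fun n => Hsh (INR (S n) + y) / (INR (S n) * (INR (S n) + 1))) (Hsh y + Hsh y / y).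
Proof.
  intro Hy. apply is_series_Hsh_weighted_of; [lra|now apply is_series_inv_mul_shift].
Qed.

Lemma ex_series_Hsh_weighted (y : R) : 0 <= y ->
  ex_series (fun n => Hsh (INR (S n) + y) / (INR (S n) * (INR (S n) + 1))).
Proof.
  intro Hy. destruct (ex_series_inv_mul_shift y Hy) as [L HL].
  exists (Hsh y + L). now apply is_series_Hsh_weighted_of.
Qed.

Lemma is_lim_seq_Hsh_div (y : R) : 0 <= y ->
  is_lim_seq (fun n => Hsh (INR (S n) + y) / (INR (S n) + 1)) 0.
Proof.
  intro Hy. destruct (ex_series_inv_mul_shift y Hy) as [L HL].
  apply (is_lim_seq_Abel_remainder (fun n => Hsh (INR n + y)) L). revert HL.
  apply is_series_eq; [intro n; symmetry; now apply Hsh_INR_diff|reflexivity].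
Qed.

Lemma is_series_Hshm2_weighted (y : R) : 0 < y ->
  is_series (fun n => Hshm 2 (INR (S n) + y) / (INR (S n) * (INR (S n) + 1)))
            (Hshm 2 y + (Hsh y / y ^ 2 - (zeta 2 - Hshm 2 y) / y)).
Proof.
  intro Hy.
  replace (Hshm 2 y) with ((fun n => Hshm 2 (INR n + y)) 0%nat) at 1 by (simpl; f_equal; ring).
  apply (is_series_Abel (fun n => Hshm 2 (INR n + y))).
  pose proof (is_series_inv_mul_sq_shift y Hy) as H. revert H.
  apply is_series_eq; [|reflexivity].
  intro n. rewrite S_INR. pose proof (pos_INR n).
  replace (INR n + 1 + y) with (INR n + y + 1) by ring.
  rewrite Hshm_succ by (lia || lra). field. lra.
Qed.

(** * The quadratic sum [sum_(n >= 1) H_(n+x) (1/n - 1/(n+x)) = H_x^2 + H_x^(2)] *)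

Definition Wsum_term (x : R) (n : nat) : R :=
  Hsh (INR n + 1 + x) * (/ (INR n + 1) - / (INR n + 1 + x)).

Definition Wsum (x : R) : R := Series (Wsum_term x).

Lemma ex_series_Wsum_term (x : R) : 0 <= x -> ex_series (Wsum_term x).
Proof.
  intro Hx. destruct (ex_series_Hsh_weighted x Hx) as [L HL].
  apply ex_series_le_nonneg
    with (fun n => (1 + x) * (Hsh (INR (S n) + x) / (INR (S n) * (INR (S n) + 1))));
    [|exists ((1 + x) * L); now apply is_series_Rmult_l].
  intro n. unfold Wsum_term. rewrite S_INR. pose proof (pos_INR n).
  pose proof (Hsh_ge0 (INR n + 1 + x) ltac:(lra)).
  replace (/ (INR n + 1) - / (INR n + 1 + x)) with (x / ((INR n + 1) * (INR n + 1 + x)))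
    by (field; lra).
  replace ((1 + x) * (Hsh (INR n + 1 + x) / ((INR n + 1) * (INR n + 1 + 1))))
    with (Hsh (INR n + 1 + x) * ((1 + x) / ((INR n + 1) * (INR n + 1 + 1)))) by (field; lra).
  split.
  - apply Rmult_le_pos; [assumption|]. apply Rmult_le_pos; [assumption|].
    apply Rlt_le, Rinv_0_lt_compat. nra.
  - apply Rmult_le_compat_l; [assumption|].
    apply Rmult_le_reg_r with ((INR n + 1) * (INR n + 1 + 1) * (INR n + 1 + x)); [nra|].
    unfold Rdiv.
    replace (x * / ((INR n + 1) * (INR n + 1 + x)) * ((INR n + 1) * (INR n + 1 + 1) * (INR n + 1 + x)))
      with (x * (INR n + 1 + 1)) by (field; lra).
    replace ((1 + x) * / ((INR n + 1) * (INR n + 1 + 1)) * ((INR n + 1) * (INR n + 1 + 1) * (INR n + 1 + x)))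
      with ((1 + x) * (INR n + 1 + x)) by (field; lra).
    nra.
Qed.

Lemma is_series_Wsum (x : R) : 0 <= x -> is_series (Wsum_term x) (Wsum x).
Proof. intro Hx. apply Series_correct, ex_series_Wsum_term, Hx. Qed.

Lemma Wsum_0 : Wsum 0 = 0.
Proof.
  apply is_series_unique, is_series_eq with (fun _ => 0) 0; [|reflexivity|exact is_series_0].
  intro n. unfold Wsum_term. rewrite Rplus_0_r. ring.
Qed.

Lemma Wsum_le (x y : R) : 0 <= x -> x <= y -> Wsum x <= Wsum y.
Proof.
  intros Hx Hxy. apply Series_le; [|apply ex_series_Wsum_term; lra].
  intro n. unfold Wsum_term. pose proof (pos_INR n).
  pose proof (Hsh_ge0 (INR n + 1 + x) ltac:(lra)).
  pose proof (Hsh_le (INR n + 1 + x) (INR n + 1 + y) ltac:(lra) ltac:(lra)).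
  assert (/ (INR n + 1 + x) <= / (INR n + 1)) by (apply Rinv_le_contravar; lra).
  assert (/ (INR n + 1 + y) <= / (INR n + 1 + x)) by (apply Rinv_le_contravar; lra).
  split; [apply Rmult_le_pos|apply Rmult_le_compat]; lra.
Qed.

Lemma is_lim_seq_Hsh_div_shift (x : R) : 0 <= x ->
  is_lim_seq (fun n => Hsh (INR n + 1 + x) / (INR n + 1 + x)) 0.
Proof.
  intro Hx.
  apply is_lim_seq_le_le with (fun _ => 0) (fun n => 2 * (Hsh (INR (S n) + x) / (INR (S n) + 1)));
    [|apply is_lim_seq_const|].
  - intro n. rewrite S_INR. pose proof (pos_INR n).
    pose proof (Hsh_ge0 (INR n + 1 + x) ltac:(lra)). split.
    + apply Rmult_le_pos; [assumption|]. apply Rlt_le, Rinv_0_lt_compat; lra.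
    + unfold Rdiv. rewrite <- Rmult_assoc, (Rmult_comm 2), Rmult_assoc.
      apply Rmult_le_compat_l; [assumption|].
      replace (2 * / (INR n + 1 + 1)) with (/ ((INR n + 1 + 1) / 2)) by (field; lra).
      apply Rinv_le_contravar; lra.
  - replace (Finite 0) with (Finite (2 * 0)) by (f_equal; ring).
    apply is_lim_seq_mult'; [apply is_lim_seq_const|now apply is_lim_seq_Hsh_div].
Qed.

(* [Wsum_term (x + 1) n - Wsum_term x n] is [1/((n+1)(n+x+2))] plus a telescoping term. *)
Lemma Wsum_succ (x : R) : 0 <= x -> Wsum (x + 1) = Wsum x + 2 * (Hsh (x + 1) / (x + 1)).
Proof.
  intro Hx.
  pose proof (is_series_Rminus _ _ _ _ (is_series_Wsum (x + 1) ltac:(lra)) (is_series_Wsum x Hx)) as Hdiff.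
  pose proof (is_series_Rplus _ _ _ _ (is_series_inv_mul_shift (x + 1) ltac:(lra))
                (is_series_telescope _ 0 (is_lim_seq_Hsh_div_shift x Hx))) as Hsum.
  assert (Hval : Wsum (x + 1) - Wsum x = Hsh (x + 1) / (x + 1) + (Hsh (x + 1) / (x + 1) - 0)); [|lra].
  apply (is_series_val_unique _ _ _ Hdiff). revert Hsum. apply is_series_eq.
  - intro n. unfold Wsum_term. rewrite S_INR. pose proof (pos_INR n).
    replace (INR n + 1 + 1 + x) with (INR n + 1 + x + 1) by ring.
    replace (INR n + 1 + (x + 1)) with (INR n + 1 + x + 1) by ring.
    rewrite Hsh_succ by lra. field. lra.
  - simpl. now replace (0 + 1 + x) with (x + 1) by ring.
Qed.

(* The defect is 1-periodic and vanishes at [0]; on [[n, n + 1]] monotonicity of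
   [Wsum], [Hsh] and [Hshm 2] squeezes it to [O(H_(n+1) / n)], hence it is [0]. *)
Definition Wsum_defect (x : R) : R := Wsum x - Hsh x ^ 2 - Hshm 2 x.

Lemma Wsum_defect_succ (x : R) : 0 <= x -> Wsum_defect (x + 1) = Wsum_defect x.
Proof.
  intro Hx. unfold Wsum_defect.
  rewrite Wsum_succ, Hsh_succ, Hshm_succ by (lia || lra). field. lra.
Qed.

Lemma Wsum_defect_shift (x : R) (n : nat) : 0 <= x -> Wsum_defect (x + INR n) = Wsum_defect x.
Proof.
  intro Hx. induction n as [|n IH]; [simpl; now rewrite Rplus_0_r|].
  rewrite S_INR, <- Rplus_assoc, Wsum_defect_succ; [exact IH|].
  pose proof (pos_INR n). lra.
Qed.

Lemma Wsum_defect_INR (n : nat) : Wsum_defect (INR n) = 0.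
Proof.
  rewrite <- (Rplus_0_l (INR n)), Wsum_defect_shift by lra.
  unfold Wsum_defect. rewrite Wsum_0, Hsh_0, Hshm_0 by lia. ring.
Qed.

Lemma Wsum_defect_bound (y : R) (n : nat) : 0 <= y <= 1 ->
  Rabs (Wsum_defect y) <= 8 * (Hsh (INR (S n) + 0) / (INR (S n) + 1)) + / (INR n + 1).
Proof.
  intro Hy. rewrite <- (Wsum_defect_shift y n) by lra.
  replace (Wsum_defect (y + INR n)) with (Wsum_defect (y + INR n) - Wsum_defect (INR n))
    by (rewrite Wsum_defect_INR; ring).
  pose proof (pos_INR n) as Hn. rewrite S_INR, Rplus_0_r. unfold Wsum_defect.
  set (x := INR n) in *. set (h := Hsh (x + 1)).
  pose proof (Wsum_le x (y + x) ltac:(lra) ltac:(lra)) as W1.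
  pose proof (Wsum_le (y + x) (x + 1) ltac:(lra) ltac:(lra)) as W2.
  rewrite Wsum_succ in W2 by lra. fold h in W2.
  pose proof (Hsh_le x (y + x) ltac:(lra) ltac:(lra)) as M1.
  pose proof (Hsh_le (y + x) (x + 1) ltac:(lra) ltac:(lra)) as M2.
  rewrite Hsh_succ in M2 by lra.
  pose proof (Hshm_le 2 x (y + x) (le_n 2) ltac:(lra) ltac:(lra)) as N1.
  pose proof (Hshm_le 2 (y + x) (x + 1) (le_n 2) ltac:(lra) ltac:(lra)) as N2.
  rewrite Hshm_succ in N2 by (lia || lra).
  pose proof (Hsh_ge0 x ltac:(lra)) as P0.
  assert (Hh : h = Hsh x + / (x + 1)) by (apply Hsh_succ; lra).
  assert (Hi : 0 < / (x + 1)) by (apply Rinv_0_lt_compat; lra).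
  assert (Hi2 : / (x + 1) ^ 2 <= / (x + 1)) by (apply Rinv_le_contravar; nra).
  assert (Hi3 : 2 * (h / (x + 1)) <= 4 * (h / (x + 1 + 1))).
  { unfold Rdiv. rewrite (Rmult_comm h), (Rmult_comm h), <- !Rmult_assoc.
    apply Rmult_le_compat_r; [lra|].
    replace (2 * / (x + 1)) with (/ ((x + 1) / 2)) by (field; lra).
    replace (4 * / (x + 1 + 1)) with (/ ((x + 1 + 1) / 4)) by (field; lra).
    apply Rinv_le_contravar; lra. }
  assert (Hsq : 0 <= Hsh (y + x) ^ 2 - Hsh x ^ 2 <= 2 * (h / (x + 1))).
  { split; [nra|].
    replace (Hsh (y + x) ^ 2 - Hsh x ^ 2) with ((Hsh (y + x) - Hsh x) * (Hsh (y + x) + Hsh x))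
      by ring.
    replace (2 * (h / (x + 1))) with (/ (x + 1) * (2 * h)) by (field; lra).
    apply Rmult_le_compat; nra. }
  apply Rabs_le. split; nra.
Qed.

Lemma Wsum_defect_eq0_unit (y : R) : 0 <= y <= 1 -> Wsum_defect y = 0.
Proof.
  intro Hy.
  assert (Hlim : is_lim_seq (fun n => 8 * (Hsh (INR (S n) + 0) / (INR (S n) + 1)) + / (INR n + 1)) 0).
  { replace (Finite 0) with (Finite (8 * 0 + 0)) by (f_equal; ring).
    apply is_lim_seq_plus'; [|apply is_lim_seq_inv_INR].
    apply is_lim_seq_mult'; [apply is_lim_seq_const|apply is_lim_seq_Hsh_div; lra]. }
  pose proof (is_lim_seq_le _ _ (Rabs (Wsum_defect y)) 0 (fun n => Wsum_defect_bound y n Hy)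
    (is_lim_seq_const _) Hlim) as Hle.
  simpl in Hle. pose proof (Rabs_pos (Wsum_defect y)). apply Rabs_eq_0. lra.
Qed.

Lemma Wsum_defect_eq0 (y : R) : 0 <= y -> Wsum_defect y = 0.
Proof.
  intro Hy. destruct (INR_unbounded y) as [m Hm].
  revert y Hy Hm. induction m as [|m IH]; intros y Hy Hm.
  - apply Wsum_defect_eq0_unit. simpl in Hm. lra.
  - destruct (Rle_dec y 1) as [Hy1|Hy1]; [apply Wsum_defect_eq0_unit; lra|].
    replace y with ((y - 1) + 1) by ring. rewrite Wsum_defect_succ by lra.
    apply IH; [lra|]. rewrite S_INR in Hm. lra.
Qed.

Lemma Wsum_eq (x : R) : 0 <= x -> Wsum x = Hsh x ^ 2 + Hshm 2 x.
Proof. intro Hx. pose proof (Wsum_defect_eq0 x Hx). unfold Wsum_defect in *. lra. Qed.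

Lemma is_series_Hsh_div_mul_shift (y : R) : 0 < y ->
  is_series (fun n => Hsh (INR (S n) + y) / (INR (S n) * (INR (S n) + y)))
            ((Hsh y ^ 2 + Hshm 2 y) / y).
Proof.
  intro Hy. pose proof (is_series_Rmult_l (/ y) _ _ (is_series_Wsum y ltac:(lra))) as H.
  revert H. apply is_series_eq.
  - intro n. unfold Wsum_term. rewrite S_INR. pose proof (pos_INR n). field. lra.
  - rewrite Wsum_eq by lra. field. lra.
Qed.

Lemma is_series_Hsh_sq_weighted (y : R) : 0 < y ->
  is_series (fun n => Hsh (INR (S n) + y) ^ 2 / (INR (S n) * (INR (S n) + 1)))
    (Hsh y ^ 2 + (2 * ((Hsh y ^ 2 + Hshm 2 y) / y) - (Hsh y / y ^ 2 - (zeta 2 - Hshm 2 y) / y))).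
Proof.
  intro Hy.
  replace (Hsh y ^ 2) with ((fun n => Hsh (INR n + y) ^ 2) 0%nat) at 1 by (simpl; rewrite Rplus_0_l; reflexivity).
  apply (is_series_Abel (fun n => Hsh (INR n + y) ^ 2)).
  pose proof (is_series_Rminus _ _ _ _ (is_series_Rmult_l 2 _ _ (is_series_Hsh_div_mul_shift y Hy))
                (is_series_inv_mul_sq_shift y Hy)) as H.
  revert H. apply is_series_eq; [|reflexivity].
  intro n. pose proof (pos_INR n).
  assert (E : Hsh (INR n + y) = Hsh (INR (S n) + y) - / (INR (S n) + y)).
  { rewrite S_INR. replace (INR n + 1 + y) with (INR n + y + 1) by ring.
    rewrite Hsh_succ by lra. field. lra. }
  rewrite E, S_INR. field. lra.
Qed.

(** * Partial fractions of [1 / C(t + k, k)] *)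

Lemma C_diag (n : nat) : C n n = 1.
Proof. unfold C. rewrite Nat.sub_diag. simpl. field. apply not_0_INR, fact_neq_0. Qed.

Lemma C_0 (n : nat) : C n 0 = 1.
Proof. unfold C. rewrite Nat.sub_0_r. simpl. field. apply not_0_INR, fact_neq_0. Qed.

Lemma sum0_binomial_diff (K : nat) (h : nat -> R) :
  sum0 (S (S K)) (fun j => (-1) ^ j * C (S K) j * h j) =
  sum0 (S K) (fun j => (-1) ^ j * C K j * (h j - h (S j))).
Proof.
  rewrite (sum0_ext (S K) _ (fun j => (-1) ^ j * C K j * h j + (-1) ^ S j * C K j * h (S j)))
    by (intros i _; cbn [pow]; ring).
  rewrite sum0_plus, (sum0_succ_l (S K) (fun j => (-1) ^ j * C (S K) j * h j)),
    (sum0_succ_l K (fun j => (-1) ^ j * C K j * h j)).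
  cbn [sum0].
  rewrite (sum0_ext K _ (fun j => (-1) ^ S j * C K (S j) * h (S j) + (-1) ^ S j * C K j * h (S j)))
    by (intros i Hi; rewrite <- pascal by lia; ring).
  rewrite sum0_plus, !C_0, !C_diag. cbn [pow]. ring.
Qed.

Lemma sum0_alt_binomial (K : nat) : sum0 (S (S K)) (fun j => (-1) ^ j * C (S K) j) = 0.
Proof.
  rewrite (sum0_ext _ _ (fun j => (-1) ^ j * C (S K) j * 1)) by (intros; ring).
  rewrite sum0_binomial_diff.
  rewrite (sum0_ext _ _ (fun _ => 0 * 0)) by (intros; ring).
  rewrite sum0_scal. ring.
Qed.

Lemma sum0_binomial_inv (K : nat) (v : R) : 0 < v ->
  sum0 (S K) (fun j => (-1) ^ j * C K j * / (v + INR j)) =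
  INR (fact K) / prod0 (S K) (fun i => v + INR i).
Proof.
  revert v. induction K as [|K IH]; intros v Hv.
  - simpl. rewrite C_diag. field. lra.
  - rewrite (sum0_binomial_diff K (fun j => / (v + INR j))).
    rewrite (sum0_ext _ _ (fun j => (-1) ^ j * C K j * / (v + INR j)
                                   - (-1) ^ j * C K j * / ((v + 1) + INR j)))
      by (intros i _; rewrite S_INR; replace (v + (INR i + 1)) with (v + 1 + INR i) by ring; ring).
    rewrite sum0_minus, IH, IH by lra.
    assert (HP : 0 < prod0 (S K) (fun i => v + INR i)).
    { apply prod0_pos. intro i. pose proof (pos_INR i). lra. }
    assert (HQ : 0 < prod0 (S K) (fun i => v + 1 + INR i)).
    { apply prod0_pos. intro i. pose proof (pos_INR i). lra. }
    assert (Hlast : prod0 (S (S K)) (fun i => v + INR i)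
                    = prod0 (S K) (fun i => v + INR i) * (v + INR (S K))) by reflexivity.
    assert (Hfirst : prod0 (S (S K)) (fun i => v + INR i) = v * prod0 (S K) (fun i => v + 1 + INR i)).
    { rewrite prod0_succ_l. simpl INR at 1. rewrite Rplus_0_r. f_equal.
      apply prod0_ext. intro i. rewrite S_INR. ring. }
    pose proof (pos_INR K).
    rewrite Hfirst. replace (prod0 (S K) (fun i => v + INR i))
      with (v * prod0 (S K) (fun i => v + 1 + INR i) / (v + INR (S K)))
      by (rewrite <- Hfirst, Hlast; field; rewrite S_INR; lra).
    change (fact (S K)) with (S K * fact K)%nat. rewrite mult_INR, !S_INR.
    field. repeat split; lra.
Qed.

Lemma INR_fact_add (t k : nat) :
  INR (fact (t + k)) = INR (fact t) * prod0 k (fun i => INR t + 1 + INR i).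
Proof.
  induction k as [|k IH]; [rewrite Nat.add_0_r; simpl; ring|].
  replace (t + S k)%nat with (S (t + k)) by lia.
  change (fact (S (t + k))) with (S (t + k) * fact (t + k))%nat.
  rewrite mult_INR, IH. cbn [prod0]. rewrite S_INR, plus_INR. ring.
Qed.

(* The [j = 0] term of [sum0_binomial_inv] is traded for the vanishing alternating sum. *)
Lemma inv_C_partial_fractions (t K : nat) : (1 <= K)%nat ->
  / C (t + S K) (S K) =
  INR (S K) * sum1 K (fun j => (-1) ^ (j + 1) * C K j * (/ (INR t + 1) - / (INR t + 1 + INR j))).
Proof.
  intro HK. set (u := INR t + 1). assert (Hu : 0 < u) by (unfold u; pose proof (pos_INR t); lra).
  assert (HP : 0 < prod0 (S K) (fun i => u + INR i)).
  { apply prod0_pos. intro i. pose proof (pos_INR i). lra. }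
  assert (Hft : 0 < INR (fact t)) by (apply lt_0_INR, lt_O_fact).
  assert (HfK : 0 < INR (fact K)) by (apply lt_0_INR, lt_O_fact).
  assert (HC : / C (t + S K) (S K) = INR (S K) * (INR (fact K) / prod0 (S K) (fun i => u + INR i))).
  { unfold C. replace (t + S K - S K)%nat with t by lia.
    rewrite INR_fact_add. fold u.
    change (fact (S K)) with (S K * fact K)%nat. rewrite mult_INR, S_INR.
    pose proof (pos_INR K). field. repeat split; lra. }
  rewrite HC, <- sum0_binomial_inv by lra. f_equal.
  destruct K as [|K]; [lia|].
  rewrite (sum0_ext _ _ (fun j => (-1) ^ j * C (S K) j * (/ (u + INR j) - / u)
                                 + / u * ((-1) ^ j * C (S K) j)))
    by (intros i _; field; pose proof (pos_INR i); lra).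
  rewrite sum0_plus, sum0_scal, sum0_alt_binomial, sum0_sum1.
  replace ((-1) ^ 0 * C (S K) 0 * (/ (u + INR 0) - / u)) with 0 by (simpl; rewrite Rplus_0_r; ring).
  rewrite Rmult_0_r, Rplus_0_l, Rplus_0_r.
  apply sum1_ext. intros i _. rewrite pow_add. ring.
Qed.

Lemma inv_sub_telescope (u : R) (j : nat) : 0 < u ->
  / u - / (u + INR j) = sum0 j (fun i => / ((u + INR i) * (u + INR i + 1))).
Proof.
  intro Hu. induction j as [|j IH]; [simpl; rewrite Rplus_0_r; ring|].
  cbn [sum0]. rewrite <- IH, S_INR. pose proof (pos_INR j). field. lra.
Qed.

(** * Series against the reciprocal of a binomial coefficient *)

Section Binomial_series.

Variables F base : R -> R.

Hypothesis is_series_base : forall y, 0 < y ->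
  is_series (fun n => F (INR (S n) + y) / (INR (S n) * (INR (S n) + 1))) (base y).

Definition tail (y : R) (M : nat) : R :=
  base y - sum1 M (fun q => F (INR q + y) / (INR q * (INR q + 1))).

Lemma is_series_tail (y : R) (M : nat) : 0 < y ->
  is_series (fun n => F (INR (n + M + 1) + y) / (INR (n + M + 1) * (INR (n + M + 1) + 1)))
            (tail y M).
Proof.
  intro Hy.
  exact (is_series_shift (fun q => F (INR q + y) / (INR q * (INR q + 1))) _ (is_series_base y Hy) M).
Qed.

(* Expanding [1 / C(n + k + r, k)] by [inv_C_partial_fractions] and
   [inv_sub_telescope] writes the series as a finite combination of tails. *)
Lemma infinite_sum_div_binomial_tails (k r : nat) (alpha : R) :
  (2 <= k)%nat -> alpha > INR (k + r) ->
  infinite_sum (fun n => F (INR (n + 1) + alpha) / C (n + 1 + k + r) k)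
    (INR k * sum1 (k - 1) (fun j => (-1) ^ (j + 1) * C (k - 1) j *
       sum0 j (fun i => tail (alpha - INR r - 1 - INR i) (r + 1 + i)))).
Proof.
  intros Hk Ha. destruct k as [|[|K]]; [lia|lia|].
  replace (S (S K) - 1)%nat with (S K) by lia.
  apply is_series_Reals.
  set (A := alpha - INR r - 1).
  assert (HA : INR (S K) < A) by (unfold A; rewrite plus_INR in Ha; rewrite !S_INR in *; lra).
  set (term := fun i n => F (INR (n + 1) + alpha)
                 * / ((INR (n + r + 1) + 1 + INR i) * (INR (n + r + 1) + 1 + INR i + 1))).
  apply is_series_eq
    with (fun n => INR (S (S K)) * sum1 (S K) (fun j => (-1) ^ (j + 1) * C (S K) j * sum0 j (fun i => term i n)))
         (INR (S (S K)) * sum1 (S K) (fun j => (-1) ^ (j + 1) * C (S K) j * sum0 j (fun i => tail (A - INR i) (r + 1 + i))));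
    [|reflexivity|].
  - intro n. unfold Rdiv.
    replace (n + 1 + S (S K) + r)%nat with (n + r + 1 + S (S K))%nat by lia.
    rewrite inv_C_partial_fractions by lia.
    rewrite (Rmult_comm (F _)), Rmult_assoc. f_equal.
    rewrite (Rmult_comm _ (F _)), <- sum1_scal. apply sum1_ext. intros j _.
    rewrite inv_sub_telescope by (pose proof (pos_INR (n + r + 1)); lra).
    unfold term. rewrite sum0_scal. ring.
  - apply is_series_Rmult_l, is_series_sum1. intros j Hj.
    apply is_series_Rmult_l, is_series_sum0. intros i Hi.
    assert (Hy : 0 < A - INR i) by (assert (INR i < INR (S K)) by (apply lt_INR; lia); lra).
    pose proof (is_series_tail (A - INR i) (r + 1 + i) Hy) as Htail. revert Htail.
    apply is_series_eq; [|reflexivity]. intro n. unfold term.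
    replace (INR (n + (r + 1 + i) + 1) + (A - INR i)) with (INR (n + 1) + alpha)
      by (unfold A; rewrite !plus_INR; simpl; ring).
    replace (INR (n + (r + 1 + i) + 1)) with (INR (n + r + 1) + 1 + INR i)
      by (rewrite !plus_INR; simpl; ring).
    reflexivity.
Qed.

Variables P corr : R -> R.

Hypothesis base_step : forall x, 0 <= x ->
  P (x + 1) - P x + x * F (x + 1) / (x + 1) + corr (x + 1) = base (x + 1).

Definition closed_form (x : R) (M : nat) : R :=
  P x - x * sum1 M (fun i => F (x + INR i) / (INR i * (x + INR i))).

(* Induction on [M]; the step is the partial fraction identity
   [1/(m(m+1)) = (x+1)/(m(x+m+1)) - x/((m+1)(x+m+1))]. *)
Lemma tail_closed_form (x : R) (M : nat) : 0 <= x ->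
  tail (x + 1) M = closed_form (x + 1) M - closed_form x (S M) + corr (x + 1).
Proof.
  intro Hx. induction M as [|M IH].
  - unfold tail, closed_form. cbn [sum1]. rewrite <- base_step by exact Hx.
    simpl INR. field. lra.
  - unfold tail, closed_form in *. cbn [sum1] in *.
    pose proof (pos_INR M) as HM. rewrite !S_INR in *.
    replace (INR M + 1 + (x + 1)) with (x + INR M + 2) by ring.
    replace (x + 1 + (INR M + 1)) with (x + INR M + 2) by ring.
    replace (x + (INR M + 1 + 1)) with (x + INR M + 2) by ring.
    set (f := F (x + INR M + 2)).
    assert (Hpf : f / ((INR M + 1) * (INR M + 1 + 1))
                  = (x + 1) * (f / ((INR M + 1) * (x + INR M + 2)))
                    - x * (f / ((INR M + 1 + 1) * (x + INR M + 2)))) by (field; lra).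
    rewrite Hpf. lra.
Qed.

Lemma sum0_tail (A : R) (r j : nat) : INR j <= A ->
  sum0 j (fun i => tail (A - INR i) (r + 1 + i)) =
  closed_form A (r + 1) - closed_form (A - INR j) (r + 1 + j)
  + sum1 j (fun i => corr (A + INR i - INR j)).
Proof.
  rewrite sum1_reflect. induction j as [|j IH]; intro Hj.
  - simpl. rewrite Rminus_0_r, Nat.add_0_r. ring.
  - rewrite S_INR in Hj. pose proof (pos_INR j).
    cbn [sum0]. rewrite IH by lra.
    assert (Hx : 0 <= A - INR (S j)) by (rewrite S_INR; lra).
    pose proof (tail_closed_form (A - INR (S j)) (r + 1 + j) Hx) as Hstep.
    replace (A - INR (S j) + 1) with (A - INR j) in Hstep by (rewrite S_INR; ring).
    replace (S (r + 1 + j)) with (r + 1 + S j)%nat in Hstep by lia.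
    rewrite Hstep. ring.
Qed.

Lemma infinite_sum_div_binomial (k r : nat) (alpha : R) :
  (2 <= k)%nat -> alpha > INR (k + r) ->
  let A := alpha - INR r - 1 in
  infinite_sum (fun n => F (INR (n + 1) + alpha) / C (n + 1 + k + r) k)
    (INR k * sum1 (k - 1) (fun j => (-1) ^ (j + 1) * C (k - 1) j *
      ( P A - P (A - INR j)
        - (INR (r + 1 + j) - alpha) *
            sum1 (r + 1 + j) (fun i => F (A + INR i - INR j) / (INR i * (A + INR i - INR j)))
        + (INR (r + 1) - alpha) * sum1 (r + 1) (fun i => F (A + INR i) / (INR i * (A + INR i)))
        + sum1 j (fun i => corr (A + INR i - INR j)) ))).
Proof.
  intros Hk Ha A.
  pose proof (infinite_sum_div_binomial_tails k r alpha Hk Ha) as Hsum. fold A in Hsum.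
  replace (INR k * _) with (INR k * sum1 (k - 1) (fun j => (-1) ^ (j + 1) * C (k - 1) j *
    sum0 j (fun i => tail (A - INR i) (r + 1 + i)))); [exact Hsum|].
  f_equal. apply sum1_ext. intros j Hj. f_equal.
  rewrite sum0_tail.
  2: { assert (Hjk : (j <= k - 1)%nat) by lia. apply le_INR in Hjk.
       rewrite minus_INR in Hjk by lia. rewrite plus_INR in Ha. unfold A. simpl in Hjk. lra. }
  unfold closed_form. rewrite !plus_INR.
  rewrite (sum1_ext (r + 1 + j) (fun i => F (A + INR i - INR j) / _)
             (fun i => F (A - INR j + INR i) / (INR i * (A - INR j + INR i))))
    by (intros i _; now replace (A + INR i - INR j) with (A - INR j + INR i) by ring).
  unfold A. simpl INR. ring.
Qed.

End Binomial_series.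

Lemma Hsh_base_step (x : R) : 0 <= x ->
  (Hsh (x + 1) ^ 2 + Hshm 2 (x + 1)) - (Hsh x ^ 2 + Hshm 2 x) + x * Hsh (x + 1) / (x + 1) + 0
  = Hsh (x + 1) + Hsh (x + 1) / (x + 1).
Proof.
  intro Hx.
  replace (Hsh x) with (Hsh (x + 1) - / (x + 1)) by (rewrite Hsh_succ by lra; ring).
  replace (Hshm 2 x) with (Hshm 2 (x + 1) - / (x + 1) ^ 2) by (rewrite Hshm_succ by (lia || lra); ring).
  field. lra.
Qed.

Lemma Hshm2_base_step (x : R) : 0 <= x ->
  (2 * Hshm 3 (x + 1) + 2 * Hsh (x + 1) * Hshm 2 (x + 1) - Hsh (x + 1) * zeta 2)
  - (2 * Hshm 3 x + 2 * Hsh x * Hshm 2 x - Hsh x * zeta 2)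
  + x * Hshm 2 (x + 1) / (x + 1) - Hsh (x + 1) / (x + 1) ^ 2
  = Hshm 2 (x + 1) + (Hsh (x + 1) / (x + 1) ^ 2 - (zeta 2 - Hshm 2 (x + 1)) / (x + 1)).
Proof.
  intro Hx.
  replace (Hsh x) with (Hsh (x + 1) - / (x + 1)) by (rewrite Hsh_succ by lra; ring).
  replace (Hshm 2 x) with (Hshm 2 (x + 1) - / (x + 1) ^ 2) by (rewrite Hshm_succ by (lia || lra); ring).
  replace (Hshm 3 x) with (Hshm 3 (x + 1) - / (x + 1) ^ 3) by (rewrite Hshm_succ by (lia || lra); ring).
  field. lra.
Qed.

Lemma Hsh_sq_base_step (x : R) : 0 <= x ->
  (Hsh (x + 1) ^ 3 + Hsh (x + 1) * Hshm 2 (x + 1) + Hsh (x + 1) * zeta 2)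
  - (Hsh x ^ 3 + Hsh x * Hshm 2 x + Hsh x * zeta 2)
  + x * Hsh (x + 1) ^ 2 / (x + 1) + Hsh (x + 1) / (x + 1) ^ 2
  = Hsh (x + 1) ^ 2 + (2 * ((Hsh (x + 1) ^ 2 + Hshm 2 (x + 1)) / (x + 1))
      - (Hsh (x + 1) / (x + 1) ^ 2 - (zeta 2 - Hshm 2 (x + 1)) / (x + 1))).
Proof.
  intro Hx.
  replace (Hsh x) with (Hsh (x + 1) - / (x + 1)) by (rewrite Hsh_succ by lra; ring).
  replace (Hshm 2 x) with (Hshm 2 (x + 1) - / (x + 1) ^ 2) by (rewrite Hshm_succ by (lia || lra); ring).
  field. lra.
Qed.

Theorem mainTheorem17 (k r : nat) (alpha : R)
  (hk : (2 <= k)%nat) (ha : alpha > INR (k + r)) :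
  let A := alpha - INR r - 1 in
  infinite_sum (fun n => Hsh (INR (n + 1) + alpha) / C (n + 1 + k + r) k)
    (INR k * sum1 (k - 1) (fun j => (-1) ^ (j + 1) * C (k - 1) j *
      ( Hsh A ^ 2 + Hshm 2 A - Hsh (A - INR j) ^ 2 - Hshm 2 (A - INR j)
        - (INR (r + 1 + j) - alpha) *
            sum1 (r + 1 + j) (fun i => Hsh (A + INR i - INR j) / (INR i * (A + INR i - INR j)))
        + (INR (r + 1) - alpha) *
            sum1 (r + 1) (fun i => Hsh (A + INR i) / (INR i * (A + INR i))) ))) /\
  infinite_sum (fun n => Hshm 2 (INR (n + 1) + alpha) / C (n + 1 + k + r) k)
    (INR k * sum1 (k - 1) (fun j => (-1) ^ (j + 1) * C (k - 1) j *
      ( (INR (r + 1) - alpha) *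
            sum1 (r + 1) (fun i => Hshm 2 (A + INR i) / (INR i * (A + INR i)))
        - (INR (r + 1 + j) - alpha) *
            sum1 (r + 1 + j) (fun i => Hshm 2 (A + INR i - INR j) / (INR i * (A + INR i - INR j)))
        - sum1 j (fun i => Hsh (A + INR i - INR j) / (A + INR i - INR j) ^ 2)
        + 2 * Hshm 3 A + Hsh (A - INR j) * zeta 2 + 2 * Hsh A * Hshm 2 A
        - 2 * Hshm 3 (A - INR j) - Hsh A * zeta 2
        - 2 * Hsh (A - INR j) * Hshm 2 (A - INR j) ))) /\
  infinite_sum (fun n => Hsh (INR (n + 1) + alpha) ^ 2 / C (n + 1 + k + r) k)
    (INR k * sum1 (k - 1) (fun j => (-1) ^ (j + 1) * C (k - 1) j *
      ( Hsh A ^ 3 + Hsh A * Hshm 2 A + Hsh A * zeta 2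
        - Hsh (A - INR j) ^ 3 - Hsh (A - INR j) * Hshm 2 (A - INR j)
        - Hsh (A - INR j) * zeta 2
        + (INR (r + 1) - alpha) *
            sum1 (r + 1) (fun i => Hsh (A + INR i) ^ 2 / (INR i * (A + INR i)))
        + sum1 j (fun i => Hsh (A + INR i - INR j) / (A + INR i - INR j) ^ 2)
        - (INR (r + 1 + j) - alpha) *
            sum1 (r + 1 + j) (fun i => Hsh (A + INR i - INR j) ^ 2 / (INR i * (A + INR i - INR j))) ))).
Proof.
  intro A. split; [|split]; eapply infinite_sum_eq.
  - exact (infinite_sum_div_binomial Hsh _ is_series_Hsh_weighted
             (fun x => Hsh x ^ 2 + Hshm 2 x) (fun _ => 0) Hsh_base_step k r alpha hk ha).
  - f_equal. apply sum1_ext. intros j _. rewrite sum1_0. fold A. ring.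
  - exact (infinite_sum_div_binomial (Hshm 2) _ is_series_Hshm2_weighted
             (fun x => 2 * Hshm 3 x + 2 * Hsh x * Hshm 2 x - Hsh x * zeta 2)
             (fun y => - (Hsh y / y ^ 2)) Hshm2_base_step k r alpha hk ha).
  - f_equal. apply sum1_ext. intros j _. rewrite sum1_opp. fold A. ring.
  - exact (infinite_sum_div_binomial (fun x => Hsh x ^ 2) _ is_series_Hsh_sq_weighted
             (fun x => Hsh x ^ 3 + Hsh x * Hshm 2 x + Hsh x * zeta 2)
             (fun y => Hsh y / y ^ 2) Hsh_sq_base_step k r alpha hk ha).
  - f_equal. apply sum1_ext. intros j _. fold A. ring.
Qed.
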